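(* Let $p>3$ be a prime, $\zeta=e^{2\pi i/p}$, $K=\mathbb{Q}(\zeta)$, and let $x,y,z\in\mathbb{Z}\setminus\{0\}$ be coprime with $x^p+y^p+z^p=0$ and $p\mid y$. Let $q\ne p$ be a prime and $\mathfrak{q}_K$ a prime ideal of $\mathbb{Z}_K$ above $q$. Then for $k=1,\dots,p-2$: (i) if $\mathfrak{q}_K\mid x\zeta-y$ then $\big(\frac{x+\zeta^k y}{\mathfrak{q}_K}\big)_K=\big(\frac{\zeta^{k/2}}{\mathfrak{q}_K}\big)_K\big(\frac{\epsilon_{k+1}}{\mathfrak{q}_K}\big)_K$; (ii) if $\mathfrak{q}_K\mid z\zeta-y$ then $\big(\frac{z+\zeta^k y}{\mathfrak{q}_K}\big)_K=\big(\frac{\zeta^{k/2}}{\mathfrak{q}_K}\big)_K\big(\frac{\epsilon_{k+1}}{\mathfrak{q}_K}\big)_K$; (iii) if $\mathfrak{q}_K\mid x\zeta-z$ then $\big(\frac{x+\zeta^k z}{\mathfrak{q}_K}\big)_K\big(\frac{p}{\mathfrak{q}_K}\big)_K=\big(\frac{\zeta^{k/2}}{\mathfrak{q}_K}\big)_K\big(\frac{\epsilon_{k+1}}{\mathfrak{q}_K}\big)_K$.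
   Context: Exponents of $\zeta$ are read modulo $p$, with $1/2$ denoting the inverse of $2$ modulo $p$. For $1\le a\le p-1$, $\epsilon_a=\zeta^{(1-a)/2}\cdot\frac{1+\zeta^a}{1+\zeta}$ (a real cyclotomic unit; $\epsilon_1=1$). For a prime ideal $\mathfrak{P}$ of $\mathbb{Z}_K$ not above $p$ and $\alpha\in K$ prime to $\mathfrak{P}$, $(\alpha/\mathfrak{P})_K$ is the unique $\zeta^\mu$ with $\alpha^{(N\mathfrak{P}-1)/p}\equiv\zeta^\mu\pmod{\mathfrak{P}}$, $N\mathfrak{P}=|\mathbb{Z}_K/\mathfrak{P}|$. *)

From HB Require Import structures.
From mathcomp Require Import all_boot all_order all_algebra all_field.
From Stdlib Require Import ClassicalEpsilon.
Set Implicit Arguments. Unset Strict Implicit. Unset Printing Implicit Defensive.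
Import Order.TTheory GRing.Theory Num.Theory.
Local Open Scope ring_scope.

Definition inK (z : algC) (x : algC) : Prop :=
  exists c : {poly rat}, x = (map_poly ratr c).[z].

Definition ZK (z : algC) (x : algC) : Prop := inK z x /\ x \in Aint.

Definition is_prime_ideal (z : algC) (P : algC -> Prop) : Prop :=
  (forall x, P x -> ZK z x) /\
  P 0 /\
  (forall x y, P x -> P y -> P (x + y)) /\
  (forall a x, ZK z a -> P x -> P (a * x)) /\
  ~ P 1 /\
  (forall a b, ZK z a -> ZK z b -> P (a * b) -> P a \/ P b).

(* |Z_K / P| = N : there is a complete system of N pairwise incongruent
   representatives of Z_K modulo P. *)
Definition quot_card (z : algC) (P : algC -> Prop) (N : nat) : Prop :=
  exists s : seq algC,
    size s = N /\
    (forall r, r \in s -> ZK z r) /\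
    (forall i j, (i < N)%N -> (j < N)%N -> P (s`_i - s`_j) -> i = j) /\
    (forall x, ZK z x -> exists2 i, (i < N)%N & P (x - s`_i)).

(* p-th power residue symbol (a / P)_K, where N = N P: the (unique) z^mu with
   a^((N-1)/p) = z^mu mod P. *)
Definition prs (p : nat) (z : algC) (P : algC -> Prop) (N : nat) (a : algC)
  : algC :=
  epsilon (inhabits 0)
    (fun w => exists mu : nat, w = z ^+ mu /\ P (a ^+ ((N - 1) %/ p) - w)).

(* 1/2 modulo p (p odd) *)
Definition inv2mod (p : nat) : nat := (p.+1)./2.

(* epsilon_a = z^((1-a)/2) (1 + z^a) / (1 + z) *)
Definition cyc_unit (p : nat) (z : algC) (a : nat) : algC :=
  z ^+ ((p.+1 - a) * inv2mod p) * (1 + z ^+ a) / (1 + z).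

(* Put h = inv2mod p, so that 2 h = p + 1 and z^(k h) eps_(k+1) = (1 + z^(k+1)) / (1 + z).
   If q_K contains A z - B then, modulo q_K,
     A + z^k B = A (1 + z^(k+1)) = z^(k h) eps_(k+1) (A + B),
   and the power residue symbol, being multiplicative and constant on residue classes, reduces
   the three claims to ((A + B) / q_K) = 1, resp. (p (A + B) / q_K) = 1.  By Barlow's relations
   for the coprime Fermat triple, A + B, resp. p (A + B), is the p-th power of an integer, which
   is prime to q_K because q_K cannot contain two members of the triple. *)

From HB Require Import structures.
From mathcomp Require Import all_boot all_order all_algebra all_field.
From mathcomp Require Import ring zify.
From Stdlib Require Import ClassicalEpsilon.
Set Implicit Arguments. Unset Strict Implicit. Unset Printing Implicit Defensive.
Import Order.TTheory GRing.Theory Num.Theory.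
Local Open Scope ring_scope.

Lemma expn_gcdn (a b n : nat) : (gcdn a b ^ n)%N = gcdn (a ^ n) (b ^ n).
Proof.
have [d0|d_gt0] := posnP (gcdn a b).
  move: (dvdn_gcdl a b) (dvdn_gcdr a b); rewrite d0 !dvd0n => /eqP-> /eqP->.
  by rewrite !gcdnn.
set d := gcdn a b.
have Ea : a = (a %/ d * d)%N by rewrite divnK // dvdn_gcdl.
have Eb : b = (b %/ d * d)%N by rewrite divnK // dvdn_gcdr.
have cop : coprime (a %/ d) (b %/ d).
  by rewrite /coprime -(eqn_pmul2r d_gt0) mul1n muln_gcdl -Ea -Eb.
rewrite {1}Ea {1}Eb !expnMn -muln_gcdl.
by rewrite (eqP (coprimeXr _ (coprimeXl _ cop))) mul1n.
Qed.

Lemma coprime_mul_expn (a b c n : nat) :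
  (0 < n)%N -> coprime a b -> (a * b = c ^ n)%N -> a = (gcdn a c ^ n)%N.
Proof.
move=> n_gt0 cab Eab.
rewrite expn_gcdn -Eab -(prednK n_gt0) expnS -muln_gcdr.
by rewrite (eqP (coprimeXl _ cab)) muln1.
Qed.

Lemma coprimez_mul_expr (a b c : int) n :
  odd n -> coprimez a b -> a * b = c ^+ n -> exists d : int, a = d ^+ n.
Proof.
move=> n_odd cab Eab.
have n_gt0 : (0 < n)%N by case: (n) n_odd.
have := @coprime_mul_expn `|a|%N `|b|%N `|c|%N n n_gt0 cab.
rewrite -abszM Eab abszX => /(_ erefl) Ea.
exists ((-1) ^+ (a < 0)%R * (gcdn `|a| `|c|)%:Z).
rewrite exprMn -exprM mulnC exprM -signr_odd n_odd expr1.
by rewrite [LHS]intEsign; congr (_ * _); rewrite {1}Ea -!natz natrX.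
Qed.

Definition addX_cofactor (n : nat) (a b : int) : int :=
  \sum_(i < n) a ^+ (n.-1 - i) * (-b) ^+ i.

Lemma addX_cofactorE n a b :
  odd n -> (a + b) * addX_cofactor n a b = a ^+ n + b ^+ n.
Proof.
move=> n_odd; have := subrXX a (-b) n.
by rewrite exprNn -signr_odd n_odd expr1 !opprK mulN1r opprK => <-.
Qed.

Lemma addX_cofactor_mod n a b :
  (a + b %| addX_cofactor n a b - n%:R * a ^+ n.-1)%Z.
Proof.
rewrite /addX_cofactor mulr_natl.
have -> : a ^+ n.-1 *+ n = \sum_(i < n) a ^+ n.-1 by rewrite sumr_const card_ord.
rewrite -sumrB.
apply: rpred_sum => i _.
have Ei : a ^+ n.-1 = a ^+ (n.-1 - i) * a ^+ i.
  by rewrite -exprD subnK // -ltnS prednK // (leq_ltn_trans _ (ltn_ord i)).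
rewrite Ei -mulrBr; apply: dvdz_mull.
apply/dvdzP; exists (- \sum_(j < i) (-b) ^+ (i.-1 - j) * a ^+ j).
by rewrite subrXX; ring.
Qed.

Lemma gcdz_addX_cofactor n a b :
  coprimez a b -> (gcdz (a + b) (addX_cofactor n a b) %| n%:Z)%Z.
Proof.
move=> cab; set g := gcdz _ _.
have g_ab : (g %| a + b)%Z := dvdz_gcdl _ _.
have g_na : (g %| n%:R * a ^+ n.-1)%Z.
  have := rpredB (dvdz_gcdr (a + b) (addX_cofactor n a b))
    (dvdz_trans g_ab (addX_cofactor_mod n a b)).
  by rewrite opprB addrC subrK.
have cga : coprimez g a.
  rewrite coprimez_sym; apply: coprimez_dvdr g_ab _.
  by move: cab; rewrite /coprimez -(gcdzDl a b) /gcdz /=.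
by rewrite -(Gauss_dvdzl _ (coprimezXr n.-1 cga)) -natz.
Qed.

Lemma fermat_addX (a b c : int) n :
  odd n -> a ^+ n + b ^+ n + c ^+ n = 0 -> a ^+ n + b ^+ n = (- c) ^+ n.
Proof.
move=> n_odd E; rewrite exprNn -signr_odd n_odd expr1 mulN1r.
by apply/eqP; rewrite -addr_eq0 E.
Qed.

Lemma fermat_add_expr p (a b c : int) :
  prime p -> odd p -> coprimez a b -> ~~ (p%:Z %| a + b)%Z ->
  a ^+ p + b ^+ p + c ^+ p = 0 -> exists d, a + b = d ^+ p.
Proof.
move=> p_pr p_odd cab p_ab E.
apply: (@coprimez_mul_expr _ (addX_cofactor p a b) (- c) p p_odd).
  rewrite /coprimez.
  move: (gcdz_addX_cofactor p cab) (dvdz_gcdl (a + b) (addX_cofactor p a b)).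
  set g := gcdz _ _; case/primeP: p_pr => _ /[apply] /orP[] /eqP g_eq.
    by move: g_eq; rewrite /g /gcdz /= => ->.
  by rewrite dvdzE g_eq => p_ab'; move: p_ab; rewrite dvdzE p_ab'.
by rewrite addX_cofactorE // (fermat_addX p_odd E).
Qed.

(* With [t = a + b] we have [-b = a - t]: this is the first-order expansion of [a (a - t) ^ i]
   in [t]. *)
Lemma dvdz_sqr_taylor (a b : int) i :
  ((a + b) ^+ 2 %| a * (-b) ^+ i - a ^+ i.+1 + i%:R * (a + b) * a ^+ i)%Z.
Proof.
elim: i => [|i /dvdzP[K EK]]; first by rewrite expr0 expr1 mulr1 mul0r addr0 subrr dvdz0.
apply/dvdzP; exists ((-b) * K + i%:R * a ^+ i).
have E : a * (-b) ^+ i = K * (a + b) ^+ 2 + a ^+ i.+1 - i%:R * (a + b) * a ^+ i.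
  by rewrite -EK; ring.
rewrite exprS mulrCA E !exprS -addn1 natrD; ring.
Qed.

(* Expanding every term of [a * addX_cofactor p a b] to first order in [t = a + b] leaves
   [p a ^ p - t a ^ (p - 1) 'C(p, 2)] modulo [t ^ 2]; here [p] divides both [t] and ['C(p, 2)]. *)
Lemma addX_cofactor_not_dvd_sqr p (a b : int) :
  prime p -> odd p -> (p%:Z %| a + b)%Z -> ~~ (p%:Z %| a)%Z ->
  ~~ (p%:Z ^+ 2 %| addX_cofactor p a b)%Z.
Proof.
move=> p_pr p_odd p_ab p_a; apply/negP => p2_cof.
have p_gt0 := prime_gt0 p_pr.
set t := a + b in p_ab.
have ET : \sum_(i < p) a ^+ (p.-1 - i) * (a * (-b) ^+ i - a ^+ i.+1 + i%:R * t * a ^+ i)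
   = a * addX_cofactor p a b - a ^+ p *+ p + t * a ^+ p.-1 * 'C(p, 2)%:R.
  have -> : 'C(p, 2) = (\sum_(i < p) i)%N by rewrite -bin2_sum big_mkord.
  have -> : a ^+ p *+ p = \sum_(i < p) a ^+ p by rewrite sumr_const card_ord.
  rewrite natr_sum mulr_sumr /addX_cofactor mulr_sumr -sumrB -big_split /=.
  apply: eq_bigr => i _.
  have Ei : a ^+ p.-1 = a ^+ (p.-1 - i) * a ^+ i by rewrite -exprD subnK // -ltnS prednK.
  have Ep : a ^+ p = a * a ^+ p.-1 by rewrite -exprS prednK.
  rewrite Ep Ei exprS; ring.
have p2_ET : (p%:Z ^+ 2 %| a * addX_cofactor p a b - a ^+ p *+ p + t * a ^+ p.-1 * 'C(p, 2)%:R)%Z.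
  rewrite -ET; apply: rpred_sum => i _; apply: dvdz_mull.
  exact: dvdz_trans (dvdz_exp2r 2 p_ab) (dvdz_sqr_taylor a b i).
have p2_binom : (p%:Z ^+ 2 %| t * a ^+ p.-1 * 'C(p, 2)%:R)%Z.
  rewrite mulrAC expr2; apply: dvdz_mulr; apply: dvdz_mul => //.
  rewrite dvdzE /= natz absz_nat; apply: prime_dvd_bin => //.
  by rewrite odd_prime_gt2.
have : (p%:Z ^+ 2 %| p%:Z * a ^+ p)%Z.
  have := rpredD (rpredB (dvdz_mull a p2_cof) p2_ET) p2_binom.
  by rewrite -mulr_natl; congr (_ %| _)%Z; ring.
have p_neq0 : p%:Z != 0 by rewrite -lt0n.
rewrite expr2 dvdz_mul2l // dvdzE abszX (Euclid_dvdX _ _ p_pr) => /andP[p_a' _].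
by rewrite dvdzE p_a' in p_a.
Qed.

Lemma fermat_p_add_expr p (a b c : int) :
  prime p -> odd p -> coprimez a b -> (p%:Z %| a + b)%Z -> ~~ (p%:Z %| a)%Z ->
  a ^+ p + b ^+ p + c ^+ p = 0 -> exists d, p%:Z * (a + b) = d ^+ p.
Proof.
move=> p_pr p_odd cab p_ab p_a E.
have p_cof : (p%:Z %| addX_cofactor p a b)%Z.
  rewrite -(subrK (p%:R * a ^+ p.-1) (addX_cofactor p a b)) rpredD //.
    exact: dvdz_trans p_ab (addX_cofactor_mod p a b).
  by apply: dvdz_mulr; rewrite natz.
have [s Es] := dvdzP p_cof.
have cps : coprimez p s.
  rewrite coprimezE /= prime_coprime //; apply/negP => p_s.
  by move: (addX_cofactor_not_dvd_sqr p_pr p_odd p_ab p_a); rewrite Es expr2 dvdz_mul.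
apply: (@coprimez_mul_expr _ s (- c) p p_odd); last first.
  by rewrite -(fermat_addX p_odd E) -addX_cofactorE // Es; ring.
rewrite coprimezMl cps /=.
have g_p : (gcdz (a + b) s %| p%:Z)%Z.
  apply: dvdz_trans (gcdz_addX_cofactor p cab).
  by rewrite dvdz_gcd dvdz_gcdl Es dvdz_mulr // dvdz_gcdr.
have : (gcdz (a + b) s %| gcdz p s)%Z by rewrite dvdz_gcd g_p dvdz_gcdr.
by rewrite (eqP cps) dvdz1 /coprimez /gcdz.
Qed.

Lemma fermat_coprimez n (a b c : int) :
  (0 < n)%N -> gcdz (gcdz a b) c = 1 -> a ^+ n + b ^+ n + c ^+ n = 0 -> coprimez a b.
Proof.
move=> n_gt0 g1 E; set g := gcdz a b in g1 *.
have g_cn : (g %| c ^+ n)%Z.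
  have -> : c ^+ n = - (a ^+ n + b ^+ n) by rewrite -[LHS]subr0 -E; ring.
  by rewrite rpredN rpredD // dvdz_exp // ?dvdz_gcdl ?dvdz_gcdr.
have cg_cn : coprimez g (c ^+ n) by apply: coprimezXr; rewrite /coprimez g1.
move/gcdz_idPl: g_cn; rewrite (eqP cg_cn) => g_eq.
by rewrite /coprimez -/g g_eq.
Qed.

Lemma fermat_dvdz_add p (a b c : int) :
  prime p -> a ^+ p + b ^+ p + c ^+ p = 0 -> (p%:Z %| b)%Z -> (p%:Z %| a + c)%Z.
Proof.
move=> p_pr E p_b; have Fp_char := pchar_Fp p_pr.
rewrite (dvdz_pcharf Fp_char).
suff : ((a + c)%:~R : 'F_p) ^+ p == 0 by rewrite expf_eq0 => /andP[].
rewrite rmorphD exprDn_pchar ?pnatE // -!rmorphXn -rmorphD.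
have -> : a ^+ p + c ^+ p = - b ^+ p by apply: (addIr (b ^+ p)); rewrite addNr -E; ring.
by rewrite rmorphN oppr_eq0 -(dvdz_pcharf Fp_char) dvdz_exp ?prime_gt0.
Qed.

Lemma coprimez_ndvdz p (a b : int) :
  prime p -> coprimez a b -> (p%:Z %| b)%Z -> ~~ (p%:Z %| a)%Z.
Proof.
move=> p_pr cab p_b; apply/negP => p_a.
have : (p%:Z %| gcdz a b)%Z by rewrite dvdz_gcd p_a p_b.
by rewrite (eqP cab) dvdzE /= dvdn1 => /eqP p1; rewrite p1 in p_pr.
Qed.

(* [ZK z] as a boolean predicate, so that it carries the subring structure of [Z_K]. *)
Definition intK (z : algC) : {pred algC} :=
  fun x => if excluded_middle_informative (ZK z x) then true else false.

Lemma intKP z x : reflect (ZK z x) (x \in intK z).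
Proof. by rewrite unfold_in; case: excluded_middle_informative => h; constructor. Qed.

Fact intK_subring_closed z : subring_closed (intK z).
Proof.
split.
- by apply/intKP; split; [exists 1; rewrite rmorph1 hornerC | exact: Aint1].
- move=> a b /intKP[[c ->] Aa] /intKP[[d ->] Ab]; apply/intKP.
  by split; [exists (c - d); rewrite rmorphB hornerD hornerN | exact: rpredB].
- move=> a b /intKP[[c ->] Aa] /intKP[[d ->] Ab]; apply/intKP.
  by split; [exists (c * d); rewrite rmorphM hornerM | exact: rpredM].
Qed.

HB.instance Definition _ z :=
  GRing.isSubringClosed.Build algC (intK z) (intK_subring_closed z).

Lemma prim_root_intK n z : n.-primitive_root z -> z \in intK z.
Proof.
move=> zn; apply/intKP; split; last exact: Aint_prim_root zn.
by exists 'X; rewrite map_polyX hornerX.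
Qed.

Lemma prim_root_prod_one_subX (R : fieldType) n (z : R) :
  n.-primitive_root z -> n%:R = \prod_(1 <= i < n) (1 - z ^+ i).
Proof.
move=> zn; have n_gt0 := prim_order_gt0 zn.
have := factor_Xn_sub_1 zn; rewrite big_ltn // expr0 polyC1 => E.
have := subrXX 'X (1 : {poly R}) n; rewrite expr1n -E.
move=> /(mulfI (negbT (polyXsubC_eq0 1))) E'.
rewrite (eq_bigr (fun i => ('X - (z ^+ i)%:P).[1])); last by move=> i _; rewrite hornerXsubC.
rewrite -horner_prod E' horner_sum (eq_bigr (fun _ => 1)); last first.
  by move=> i _; rewrite expr1n mulr1 hornerXn expr1n.
by rewrite sumr_const card_ord.
Qed.

Section CyclotomicUnit.

Variables (p : nat) (z : algC).
Hypotheses (p_odd : odd p) (p_gt1 : (1 < p)%N) (zp : p.-primitive_root z).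

Lemma inv2modM2 : (inv2mod p * 2)%N = p.+1.
Proof. by rewrite muln2 /inv2mod -[RHS]odd_double_half /= p_odd. Qed.

(* Since [2 * inv2mod p = p + 1], the sum times [1 - z ^ 2] is [1 - z ^ (p + 1) = 1 - z]. *)
Lemma one_add_prim_root_mul_sum : (1 + z) * \sum_(i < inv2mod p) z ^+ (2 * i) = 1.
Proof.
have z_neq1 : 1 - z != 0.
  rewrite subr_eq0 -(expr0 z) -[X in _ != X](expr1 z) (eq_prim_root_expr zp).
  by rewrite mod0n modn_small.
apply: (mulfI z_neq1); rewrite mulr1 mulrA.
have -> : (1 - z) * (1 + z) = 1 - z ^+ 2 by ring.
have := subrXX 1 (z ^+ 2) (inv2mod p).
rewrite expr1n -exprM mulnC inv2modM2 exprS prim_expr_order // mulr1 => ->.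
by congr (_ * _); apply: eq_bigr => i _; rewrite expr1n mul1r exprM.
Qed.

Lemma one_add_prim_root_neq0 : 1 + z != 0.
Proof.
by apply: contra_eq_neq one_add_prim_root_mul_sum => ->; rewrite mul0r eq_sym oner_neq0.
Qed.

Lemma inv_one_add_prim_root_intK : (1 + z)^-1 \in intK z.
Proof.
have -> : (1 + z)^-1 = \sum_(i < inv2mod p) z ^+ (2 * i).
  apply: (mulfI one_add_prim_root_neq0).
  by rewrite mulfV ?one_add_prim_root_neq0 ?one_add_prim_root_mul_sum.
by apply: rpred_sum => i _; rewrite rpredX // (prim_root_intK zp).
Qed.

Lemma cyc_unit_intK m : cyc_unit p z m \in intK z.
Proof.
have zK := prim_root_intK zp.
by rewrite /cyc_unit rpredM ?inv_one_add_prim_root_intK // rpredM ?rpredD ?rpred1 ?rpredX.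
Qed.

Lemma mul_cyc_unit k : (k <= p)%N ->
  z ^+ (k * inv2mod p) * cyc_unit p z k.+1 = (1 + z ^+ k.+1) / (1 + z).
Proof.
move=> le_kp; rewrite /cyc_unit subSS !mulrA -exprD -mulnDl subnKC //.
by rewrite exprM (prim_expr_order zp) expr1n mul1r.
Qed.

End CyclotomicUnit.

Section PrimeIdeal.

Variables (p : nat) (z : algC) (q : nat) (P : algC -> Prop) (N : nat).
Hypotheses (p_pr : prime p) (p_odd : odd p) (zp : p.-primitive_root z)
  (q_pr : prime q) (q_neq_p : q != p) (HP : is_prime_ideal z P) (Pq : P q%:R)
  (HN : quot_card z P N).

Local Notation OK := (intK z).
Local Notation sym := (prs p z P N).
Local Notation M := ((N - 1) %/ p)%N.

Let p_gt1 : (1 < p)%N := prime_gt1 p_pr.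
Let zK : z \in OK := prim_root_intK zp.

Lemma ideal0 : P 0.
Proof. by case: HP => _ []. Qed.

Lemma idealD x y : P x -> P y -> P (x + y).
Proof. by case: HP => _ [_ [idealD _]]; apply: idealD. Qed.

Lemma idealMl a x : a \in OK -> P x -> P (a * x).
Proof. by case: HP => _ [_ [_ [idealM _]]] /intKP; apply: idealM. Qed.

Lemma ideal_proper : ~ P 1.
Proof. by case: HP => _ [_ [_ [_ []]]]. Qed.

Lemma ideal_prime a b : a \in OK -> b \in OK -> P (a * b) -> P a \/ P b.
Proof. by case: HP => _ [_ [_ [_ [_ prime_P]]]] /intKP aK /intKP; apply: prime_P. Qed.

Lemma idealMr a x : a \in OK -> P x -> P (x * a).
Proof. by rewrite mulrC; apply: idealMl. Qed.

Lemma idealN x : P x -> P (- x).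
Proof. by rewrite -mulN1r; apply: idealMl; rewrite rpredN rpred1. Qed.

Lemma idealB x y : P x -> P y -> P (x - y).
Proof. by move=> Px /idealN; apply: idealD. Qed.

Lemma ideal_primeX a n : a \in OK -> P (a ^+ n) -> P a.
Proof.
move=> aK; elim: n => [/ideal_proper //|n IHn].
by rewrite exprS => /(ideal_prime aK (rpredX n aK))[|/IHn].
Qed.

Lemma idealX a n : (0 < n)%N -> a \in OK -> P a -> P (a ^+ n).
Proof. by move=> n_gt0 aK Pa; rewrite -(prednK n_gt0) exprS; apply: idealMr Pa; apply: rpredX. Qed.

Lemma ideal_notM a b : a \in OK -> b \in OK -> ~ P a -> ~ P b -> ~ P (a * b).
Proof. by move=> aK bK nPa nPb /(ideal_prime aK bK)[]. Qed.

Lemma ideal_congM x1 x2 y1 y2 : x1 \in OK -> y2 \in OK ->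
  P (x1 - x2) -> P (y1 - y2) -> P (x1 * y1 - x2 * y2).
Proof.
move=> x1K y2K Px Py.
have -> : x1 * y1 - x2 * y2 = x1 * (y1 - y2) + (x1 - x2) * y2 by ring.
by apply: idealD; [apply: idealMl | apply: idealMr].
Qed.

Lemma ideal_congX x y n : x \in OK -> y \in OK -> P (x - y) -> P (x ^+ n - y ^+ n).
Proof.
move=> xK yK Pxy; rewrite subrXX; apply: idealMr Pxy.
by apply: rpred_sum => i _; rewrite rpredM ?rpredX.
Qed.

Lemma ideal_cong_prod (I : Type) (r : seq I) (Q : pred I) (F G : I -> algC) :
  (forall i, F i \in OK) -> (forall i, G i \in OK) -> (forall i, Q i -> P (F i - G i)) ->
  P (\prod_(i <- r | Q i) F i - \prod_(i <- r | Q i) G i).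
Proof.
move=> FK GK PFG; elim: r => [|i r IHr]; first by rewrite !big_nil subrr; apply: ideal0.
rewrite !big_cons; case: ifP => // Qi.
exact: ideal_congM (FK i) (rpred_prod _ (fun j _ => GK j)) (PFG i Qi) IHr.
Qed.

Lemma ideal_prime_prod (I : Type) (r : seq I) (Q : pred I) (F : I -> algC) :
  (forall i, F i \in OK) -> P (\prod_(i <- r | Q i) F i) -> exists2 i, Q i & P (F i).
Proof.
move=> FK; elim: r => [|i r IHr]; first by rewrite big_nil => /ideal_proper.
rewrite big_cons; case: ifP => // Qi.
by move/(ideal_prime (FK i) (rpred_prod _ (fun j _ => FK j)))=> [|/IHr]; first exists i.
Qed.

Lemma ideal_gcdz (m n : int) : P m%:~R -> P n%:~R -> P (gcdz m n)%:~R.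
Proof.
move=> Pm Pn; have [u [v <-]] := Bezoutz m n.
by rewrite rmorphD !rmorphM; apply: idealD; apply: idealMl => //; apply: rpred_int.
Qed.

Lemma ideal_notp : ~ P p%:R.
Proof.
move=> Pp; apply: ideal_proper.
have cpq : coprimez p q by rewrite coprimezE /= prime_coprime // dvdn_prime2 // eq_sym.
by have := @ideal_gcdz p q Pp Pq; rewrite (eqP cpq).
Qed.

Lemma ideal_notXz n : ~ P (z ^+ n).
Proof.
move=> /(ideal_primeX zK) Pz; apply: ideal_proper.
rewrite -(prim_expr_order zp) -(prednK (prime_gt0 p_pr)) exprS.
exact: idealMr (rpredX _ zK) Pz.
Qed.

Lemma ideal_not_one_subX d : (0 < d < p)%N -> ~ P (1 - z ^+ d).
Proof.
case/andP=> d_gt0 d_lt_p P1d; apply: ideal_notp.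
rewrite (prim_root_prod_one_subX zp) (bigD1_seq d) /= ?mem_index_iota ?d_gt0 ?iota_uniq //.
by apply: idealMr P1d; apply: rpred_prod => i _; rewrite rpredB ?rpred1 ?rpredX.
Qed.

Lemma ideal_eqXz i j : P (z ^+ i - z ^+ j) -> i = j %[mod p].
Proof.
rewrite -(prim_expr_mod zp i) -(prim_expr_mod zp j).
have := ltn_pmod i (prime_gt0 p_pr); have := ltn_pmod j (prime_gt0 p_pr).
move: (i %% p)%N (j %% p)%N => a b b_lt_p a_lt_p Pab.
wlog le_ab : a b a_lt_p b_lt_p Pab / (a <= b)%N.
  move=> W; case: (leqP a b) => [|/ltnW le_ba]; first exact: W.
  by apply/esym/W; rewrite // -opprB; apply: idealN.
apply/eqP; rewrite eqn_leq le_ab leqNgt; apply/negP => lt_ab.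
have E : z ^+ a - z ^+ b = z ^+ a * (1 - z ^+ (b - a)) by rewrite mulrBr mulr1 -exprD subnKC.
move: Pab; rewrite E; apply: ideal_notM; rewrite ?rpredB ?rpred1 ?rpredX //.
  exact: ideal_notXz.
by apply: ideal_not_one_subX; rewrite subn_gt0 lt_ab (leq_ltn_trans (leq_subr a b) b_lt_p).
Qed.

Lemma ideal_not_one_addX m : (0 < m < p)%N -> ~ P (1 + z ^+ m).
Proof.
case/andP=> m_gt0 m_lt_p P1m.
have : P ((1 - z ^+ m) * (1 + z ^+ m)) by apply: idealMl P1m; rewrite rpredB ?rpred1 ?rpredX.
have -> : (1 - z ^+ m) * (1 + z ^+ m) = z ^+ 0 - z ^+ (2 * m) by rewrite mulnC exprM; ring.
have p_neq2 : p != 2 by apply: contraTneq p_odd => ->.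
move/ideal_eqXz/eqP; rewrite mod0n eq_sym -/(dvdn p _) Gauss_dvdr.
  by move/(dvdn_leq m_gt0); rewrite leqNgt m_lt_p.
by rewrite prime_coprime // dvdn_prime2.
Qed.

(* Multiplication by [a] permutes the nonzero residues, so [a ^ (N - 1)] times their product is
   congruent to that product. *)
Lemma ideal_fermat a : a \in OK -> ~ P a -> P (a ^+ (N - 1) - 1).
Proof.
move=> aK nPa; case: HN => s [size_s [s_ZK [s_inj s_surj]]].
have sK (i : 'I_N) : s`_i \in OK by apply/intKP/s_ZK/mem_nth; rewrite size_s.
have {}s_surj x : x \in OK -> exists2 i, (i < N)%N & P (x - s`_i).
  by move/intKP; apply: s_surj.
have s_injP (i j : 'I_N) : P (s`_i - s`_j) -> i = j.
  by move/(s_inj _ _ (ltn_ord i) (ltn_ord j))/val_inj.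
have [i0 lt_i0N] := s_surj 0 (rpred0 _); rewrite sub0r => /idealN; rewrite opprK => Ps0.
pose o := Ordinal lt_i0N.
have /all_sig[f Pf] (i : 'I_N) : {j : 'I_N | P (a * s`_i - s`_j)}.
  apply: constructive_indefinite_description.
  by have [j lt_jN Pj] := s_surj _ (rpredM aK (sK i)); exists (Ordinal lt_jN).
have f_inj : injective f.
  move=> i j fij; apply: s_injP; have := idealB (Pf i) (Pf j); rewrite fij.
  have -> : a * s`_i - s`_(f j) - (a * s`_j - s`_(f j)) = a * (s`_i - s`_j) by ring.
  by case/(ideal_prime aK (rpredB (sK i) (sK j))).
have fo : f o = o.
  apply: s_injP; have := idealB (idealMl aK Ps0) (Pf o).
  by rewrite opprB addrC subrK => /idealB; apply.
set S := \prod_(i | i != o) s`_i.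
have nPS : ~ P S.
  case/(ideal_prime_prod sK) => i /eqP neq_io Psi.
  by apply/neq_io/s_injP/idealB.
have PfS : \prod_(i | i != o) s`_(f i) = S.
  by rewrite /S [RHS](reindex_inj f_inj) /=; apply: eq_bigl => i; rewrite -{2}fo (inj_eq f_inj).
have := ideal_cong_prod (index_enum 'I_N) (fun i => rpredM aK (sK i)) (fun i => sK (f i))
  (fun i (_ : i != o) => Pf i).
rewrite PfS big_split /= prodr_const cardC1 card_ord -subn1 -/S.
have -> : a ^+ (N - 1) * S - S = S * (a ^+ (N - 1) - 1) by ring.
by case/ideal_prime; rewrite ?rpredB ?rpredX ?rpred1 ?rpred_prod.
Qed.

Lemma dvdn_norm_pred : (p %| N - 1)%N.
Proof.
have := ideal_fermat zK (@ideal_notXz 1); rewrite -(expr0 z) => /ideal_eqXz.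
by rewrite mod0n => /eqP.
Qed.

Lemma prs_eq a mu : P (a ^+ M - z ^+ mu) -> sym a = z ^+ mu.
Proof.
move=> Pamu; rewrite /prs.
have ex : exists w, exists mu, w = z ^+ mu /\ P (a ^+ M - w) by exists (z ^+ mu), mu.
case: (epsilon_spec (inhabits 0) _ ex) => nu [-> Panu].
apply/eqP; rewrite (eq_prim_root_expr zp) eq_sym; apply/eqP/ideal_eqXz.
rewrite (_ : z ^+ mu - z ^+ nu = (a ^+ M - z ^+ nu) - (a ^+ M - z ^+ mu)); last by ring.
exact: idealB.
Qed.

Lemma prsP a : a \in OK -> ~ P a -> exists mu, sym a = z ^+ mu /\ P (a ^+ M - z ^+ mu).
Proof.
move=> aK nPa.
have E : \prod_(0 <= i < p) (a ^+ M - z ^+ i) = (a ^+ M) ^+ p - 1.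
  rewrite -(eq_bigr _ (fun i _ => hornerXsubC (z ^+ i) (a ^+ M))) -horner_prod.
  by rewrite (factor_Xn_sub_1 zp) hornerD hornerN hornerXn hornerC.
have [i _ Pi] : exists2 i, true & P (a ^+ M - z ^+ i).
  apply: (ideal_prime_prod (r := index_iota 0 p) (Q := fun=> true)
    (fun i => rpredB (rpredX _ aK) (rpredX i zK))).
  by rewrite E -exprM divnK ?dvdn_norm_pred //; apply: ideal_fermat.
by exists i; split => //; apply: prs_eq.
Qed.

Lemma prsM a b : a \in OK -> b \in OK -> ~ P a -> ~ P b -> sym (a * b) = sym a * sym b.
Proof.
move=> aK bK nPa nPb.
have [mu [-> Pa]] := prsP aK nPa; have [nu [-> Pb]] := prsP bK nPb.
rewrite -exprD; apply: prs_eq; rewrite exprMn exprD.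
exact: ideal_congM (rpredX _ aK) (rpredX _ zK) Pa Pb.
Qed.

Lemma prs_congr a b : a \in OK -> b \in OK -> ~ P b -> P (a - b) -> sym a = sym b.
Proof.
move=> aK bK nPb Pab; have [mu [-> Pb]] := prsP bK nPb; apply: prs_eq.
rewrite (_ : a ^+ M - z ^+ mu = (a ^+ M - b ^+ M) + (b ^+ M - z ^+ mu)); last by ring.
by apply: idealD Pb; apply: ideal_congX.
Qed.

Lemma prs_exprp d : d \in OK -> ~ P d -> sym (d ^+ p) = 1.
Proof.
move=> dK nPd; rewrite -(expr0 z); apply: prs_eq.
by rewrite -exprM mulnC divnK ?dvdn_norm_pred // expr0; apply: ideal_fermat.
Qed.

Lemma ideal_not_cyc_unit m : (0 < m < p)%N -> ~ P (cyc_unit p z m).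
Proof.
move=> m_range; have invK := inv_one_add_prim_root_intK p_odd p_gt1 zp.
have nPinv : ~ P (1 + z)^-1.
  move/(idealMl (rpredD (rpred1 _) zK)).
  by rewrite mulfV ?(one_add_prim_root_neq0 p_odd p_gt1 zp) //; apply: ideal_proper.
rewrite /cyc_unit; apply: ideal_notM; rewrite ?rpredM ?rpredD ?rpred1 ?rpredX //.
apply: ideal_notM; rewrite ?rpredD ?rpred1 ?rpredX //.
  exact: ideal_notXz.
exact: ideal_not_one_addX.
Qed.

(* Modulo [A z - B] we have [B = A z], so both sides become [A (1 + z ^ (k + 1))]. *)
Lemma ideal_cong_shift k A B : A \in OK -> B \in OK -> P (A * z - B) ->
  P (A + z ^+ k * B - (1 + z ^+ k.+1) / (1 + z) * (A + B)).
Proof.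
move=> AK BK PAB; have nz := one_add_prim_root_neq0 p_odd p_gt1 zp.
have uK := inv_one_add_prim_root_intK p_odd p_gt1 zp.
have E : A + z ^+ k * B - (1 + z ^+ k.+1) / (1 + z) * (A + B)
    = ((1 + z ^+ k.+1) / (1 + z) - z ^+ k) * (A * z - B)
      + A * (1 + z ^+ k.+1) * (1 - (1 + z) / (1 + z)).
  by set u := (1 + z)^-1; rewrite exprS; ring.
rewrite E divff // subrr mulr0 addr0; apply: idealMl PAB.
by rewrite rpredB ?rpredM ?rpredD ?rpred1 ?rpredX.
Qed.

Lemma prs_shift k A B : (k.+1 < p)%N -> A \in OK -> B \in OK -> ~ P (A + B) ->
  P (A * z - B) ->
  sym (A + z ^+ k * B) = sym (z ^+ (k * inv2mod p)) * sym (cyc_unit p z k.+1) * sym (A + B).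
Proof.
move=> lt_kp AK BK nPAB PAB.
have uK : z ^+ (k * inv2mod p) \in OK := rpredX _ zK.
have eK := cyc_unit_intK p_odd p_gt1 zp k.+1.
have nPu := @ideal_notXz (k * inv2mod p).
have nPe : ~ P (cyc_unit p z k.+1) := @ideal_not_cyc_unit k.+1 lt_kp.
have nPue := ideal_notM uK eK nPu nPe.
have ueK := rpredM uK eK; have ABK := rpredD AK BK.
rewrite -(prsM uK eK nPu nPe) -(prsM ueK ABK nPue nPAB).
apply: (prs_congr _ (rpredM ueK ABK) (ideal_notM ueK ABK nPue nPAB)).
  by rewrite rpredD ?rpredM ?rpredX.
by rewrite mul_cyc_unit ?(ltnW (ltnW lt_kp)) //; apply: ideal_cong_shift.
Qed.

Lemma ideal_fermat_pair (a b c : int) : gcdz (gcdz a b) c = 1 ->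
  a ^+ p + b ^+ p + c ^+ p = 0 -> P a%:~R -> P b%:~R -> False.
Proof.
move=> g1 E Pa Pb; apply: ideal_proper.
have Pc : P c%:~R.
  apply: (ideal_primeX (rpred_int _ c) (n := p)).
  have Ec : c ^+ p = - (a ^+ p + b ^+ p) by rewrite -[LHS]subr0 -E; ring.
  rewrite -rmorphXn Ec rmorphN rmorphD !rmorphXn; apply/idealN/idealD;
    exact: idealX (prime_gt0 p_pr) (rpred_int _ _) _.
by have := ideal_gcdz (ideal_gcdz Pa Pb) Pc; rewrite g1.
Qed.

Lemma ideal_not_add (a b c : int) : gcdz (gcdz a b) c = 1 ->
  a ^+ p + b ^+ p + c ^+ p = 0 -> P (a%:~R * z - b%:~R) -> ~ P (a%:~R + b%:~R).
Proof.
move=> g1 E PAB Psum; have aK : a%:~R \in OK := rpred_int _ a.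
have Pa : P a%:~R.
  have : P (a%:~R * (1 + z)).
    by rewrite (_ : _ * _ = (a%:~R + b%:~R) + (a%:~R * z - b%:~R)); [apply: idealD | ring].
  by case/(ideal_prime aK (rpredD (rpred1 _) zK)) => // /(@ideal_not_one_addX 1 p_gt1).
apply: (ideal_fermat_pair g1 E Pa).
rewrite (_ : b%:~R = a%:~R * z - (a%:~R * z - b%:~R)); last by ring.
by apply: idealB PAB; apply: idealMr zK Pa.
Qed.

Lemma prs_fermat_add (a b c : int) k :
  gcdz (gcdz a b) c = 1 -> a ^+ p + b ^+ p + c ^+ p = 0 -> (p%:Z %| b)%Z ->
  (k.+1 < p)%N -> P (a%:~R * z - b%:~R) ->
  sym (a%:~R + z ^+ k * b%:~R) = sym (z ^+ (k * inv2mod p)) * sym (cyc_unit p z k.+1).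
Proof.
move=> g1 E p_b lt_kp PAB.
have cab := fermat_coprimez (prime_gt0 p_pr) g1 E.
have p_ab : ~~ (p%:Z %| a + b)%Z by rewrite rpredDr // (coprimez_ndvdz p_pr cab p_b).
have [d Ed] := fermat_add_expr p_pr p_odd cab p_ab E.
have nPAB := ideal_not_add g1 E PAB.
have EAB : a%:~R + b%:~R = (d%:~R : algC) ^+ p by rewrite -rmorphD Ed rmorphXn.
have nPd : ~ P d%:~R.
  by move=> Pd; apply: nPAB; rewrite EAB; apply: idealX (prime_gt0 p_pr) (rpred_int _ _) Pd.
by rewrite prs_shift ?rpred_int // EAB prs_exprp ?rpred_int ?mulr1.
Qed.

Lemma prs_fermat_p_add (a b c : int) k :
  gcdz (gcdz a b) c = 1 -> a ^+ p + b ^+ p + c ^+ p = 0 -> (p%:Z %| c)%Z ->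
  (k.+1 < p)%N -> P (a%:~R * z - b%:~R) ->
  sym (a%:~R + z ^+ k * b%:~R) * sym p%:R
    = sym (z ^+ (k * inv2mod p)) * sym (cyc_unit p z k.+1).
Proof.
move=> g1 E p_c lt_kp PAB.
have cab := fermat_coprimez (prime_gt0 p_pr) g1 E.
have p_ab : (p%:Z %| a + b)%Z by apply: (fermat_dvdz_add p_pr _ p_c); rewrite addrAC.
have p_a : ~~ (p%:Z %| a)%Z.
  have cba : coprimez b a by rewrite coprimez_sym.
  apply/negP => p_a; have := coprimez_ndvdz p_pr cba p_a.
  by rewrite -(rpredDl b p_a) p_ab.
have [d Ed] := fermat_p_add_expr p_pr p_odd cab p_ab p_a E.
have nPAB := ideal_not_add g1 E PAB.
have EAB : (a%:~R + b%:~R) * p%:R = (d%:~R : algC) ^+ p.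
  by rewrite mulrC -rmorphD -rmorphXn -Ed rmorphM /= -natz rmorph_nat.
have nPd : ~ P d%:~R.
  move=> Pd; have := idealX (prime_gt0 p_pr) (rpred_int _ d) Pd; rewrite -EAB.
  by case/ideal_prime; rewrite ?rpredD ?rpred_int ?rpred_nat //; apply: ideal_notp.
have ABK : a%:~R + b%:~R \in OK by rewrite rpredD ?rpred_int.
rewrite prs_shift ?rpred_int // -mulrA -(prsM ABK (rpred_nat _ p) nPAB ideal_notp).
by rewrite EAB prs_exprp ?rpred_int ?mulr1.
Qed.

End PrimeIdeal.

Theorem lemma3p5 (p : nat) (z : algC) (x y w : int) (q : nat)
  (P : algC -> Prop) (N : nat) :
  prime p -> (3 < p)%N -> p.-primitive_root z ->
  x != 0 -> y != 0 -> w != 0 ->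
  gcdz (gcdz x y) w = 1%N ->
  x ^+ p + y ^+ p + w ^+ p = 0 ->
  (p%:Z %| y)%Z ->
  prime q -> q != p ->
  is_prime_ideal z P -> P q%:R -> quot_card z P N ->
  forall k : nat, (1 <= k <= p - 2)%N ->
  let X := x%:~R : algC in
  let Y := y%:~R : algC in
  let W := w%:~R : algC in
  let sym := prs p z P N in
  let rhs := sym (z ^+ (k * inv2mod p)) * sym (cyc_unit p z k.+1) in
  (P (X * z - Y) -> sym (X + z ^+ k * Y) = rhs) /\
  (P (W * z - Y) -> sym (W + z ^+ k * Y) = rhs) /\
  (P (X * z - W) -> sym (X + z ^+ k * W) * sym p%:R = rhs).
Proof.
move=> p_pr p_gt3 zp _ _ _ g1 E p_y q_pr q_neq_p HP Pq HN k /andP[_ le_k] X Y W sym rhs.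
have p_odd : odd p by case: (even_prime p_pr) p_gt3 => [->|].
have lt_kp : (k.+1 < p)%N by lia.
have g_wyx : gcdz (gcdz w y) x = 1 by rewrite gcdzC gcdzA gcdzAC.
have g_xwy : gcdz (gcdz x w) y = 1 by rewrite gcdzAC.
have E_wyx : w ^+ p + y ^+ p + x ^+ p = 0 by rewrite -E; ring.
have E_xwy : x ^+ p + w ^+ p + y ^+ p = 0 by rewrite -E; ring.
split; [|split].
- exact: (prs_fermat_add p_pr p_odd zp q_pr q_neq_p HP Pq HN g1 E p_y lt_kp).
- exact: (prs_fermat_add p_pr p_odd zp q_pr q_neq_p HP Pq HN g_wyx E_wyx p_y lt_kp).
- exact: (prs_fermat_p_add p_pr p_odd zp q_pr q_neq_p HP Pq HN g_xwy E_xwy p_y lt_kp).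
Qed.
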